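(* In the model described in the context, suppose $\triangle C=0$. Let $\underline\alpha_x=(M+N+1)k$ and $\bar\alpha_x=\frac{(M+1)\sqrt{N+1}}{2(\sqrt{N+1}-1)}Nk$. Then for all $\alpha_x\in[\underline\alpha_x,\bar\alpha_x]$ there exist $(f,x)\in Q$ and $x_S\in X(0)$ such that \[Mx+Ny_j(f\mathbf1,x\mathbf1)<Mx_S+Ny_j(\mathbf0,x_S\mathbf1),\qquad \mathsf{SW}(y_j(f\mathbf1,x\mathbf1),x)<\mathsf{SW}(y_j(\mathbf0,x_S\mathbf1),x_S).\] Moreover, \[\frac{Mx_S+Ny_j(\mathbf0,x_S\mathbf1)}{Mx+Ny_j(f\mathbf1,x\mathbf1)}\le\frac{(MN+M+N)(M+1)}{M(M+1)(N+1)+2(N+1-\sqrt{N+1})},\] \[\frac{\mathsf{SW}(y_j(\mathbf0,x_S\mathbf1),x_S)}{\mathsf{SW}(y_j(f\mathbf1,x\mathbf1),x)}\le\frac{(M+1)^2(MN+M+N)(MN+M+N+2)}{(N+1)\big((M^2+M+2)\sqrt{N+1}-2\big)\big((M^2+3M)\sqrt{N+1}+2\big)},\] where the inequalities are tight.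
   Context: Model: $M\ge1$ leaders and $N\ge2$ followers; inverse demand $P(q)=\alpha-\beta q$, $\alpha,\beta>0$; leader marginal cost $C$, follower marginal cost $c$, $c\ge C>0$; follower capacity $k>0$. Leader $i$ produces $x_i\ge0$; follower $j$ takes forward position $f_j\in\mathbb{R}$ and spot production $y_j\in[0,k]$. Given $\mathbf f,\mathbf x$, the spot market is the game among followers where follower $j$ chooses $y_j\in[0,k]$ to maximize $P(\sum_ix_i+\sum_{j'}y_{j'})(y_j-f_j)-cy_j$; its unique Nash equilibrium is $\mathbf y(\mathbf f,\mathbf x)=(y_1(\mathbf f,\mathbf x),\dots,y_N(\mathbf f,\mathbf x))$. Follower $j$'s forward payoff is $(P(\sum_ix_i+\sum_{j'}y_{j'}(\mathbf f,\mathbf x))-c)y_j(\mathbf f,\mathbf x)$, maximized over $f_j\in\mathbb{R}$; leader $i$'s payoff is $\psi_i=(P(\sum_ix_i+\sum_{j'}y_{j'}(\mathbf f,\mathbf x))-C)x_i$, maximized over $x_i\in\mathbb{R}_+$. A Nash equilibrium of the forward market is $(\mathbf f,\mathbf x)$ where no leader or follower can strictly gain by a unilateral deviation; $Q=\{(f,x)\in\mathbb{R}\times\mathbb{R}_+:(f\mathbf1,x\mathbf1)\text{ is a Nash equilibrium}\}$. The symmetric Stackelberg equilibria are $X(0)=\{x\in\mathbb{R}_+:\psi_i(x;x\mathbf1,\mathbf0)\ge\psi_i(\bar x;x\mathbf1,\mathbf0)\ \forall\bar x\in\mathbb{R}_+,\ \forall i\}$, where $\psi_i(\bar x;x\mathbf1,\mathbf0)$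 is leader $i$'s payoff when it produces $\bar x$, the other leaders produce $x$, and all followers' forward positions are $0$. Social welfare of symmetric productions (followers $y$, leaders $x$): $\mathsf{SW}(y,x)=\int_0^{Mx+Ny}P(w)\,dw-(MCx+Ncy)$. $\alpha_x=(\alpha-C)/\beta$, $\triangle C=(c-C)/\beta$. *)

From Stdlib Require Import Reals Lra ClassicalEpsilon.
Open Scope R_scope.

Fixpoint sumR (n : nat) (g : nat -> R) : R :=
  match n with
  | O => 0
  | S n' => sumR n' g + g n'
  end.

Definition upd (g : nat -> R) (j : nat) (v : R) : nat -> R :=
  fun i => if Nat.eqb i j then v else g i.

Definition cst (a : R) : nat -> R := fun _ => a.

Section Model.
(* M leaders (indices 0..M-1), N followers (indices 0..N-1),
   P(q) = alpha - beta q, leader cost C, follower cost c, capacity k. *)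
Variables (M N : nat) (alpha beta C c k : R).

Definition P (q : R) : R := alpha - beta * q.

(* follower j's spot-market payoff, given forward positions f, leaders' x,
   followers' productions y *)
Definition spot_payoff (f x y : nat -> R) (j : nat) : R :=
  P (sumR M x + sumR N y) * (y j - f j) - c * y j.

Definition spot_NE (f x : nat -> R) (y : nat -> R) : Prop :=
  (forall j, (j < N)%nat -> 0 <= y j <= k) /\
  (forall j, (j < N)%nat -> forall v, 0 <= v <= k ->
      spot_payoff f x (upd y j v) j <= spot_payoff f x y j).

(* y(f,x): the (unique) spot-market Nash equilibrium *)
Definition yspot (f x : nat -> R) : nat -> R :=
  epsilon (inhabits (cst 0)) (spot_NE f x).

Definition total (f x : nat -> R) : R := sumR M x + sumR N (yspot f x).

Definition follower_payoff (f x : nat -> R) (j : nat) : R :=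
  (P (total f x) - c) * yspot f x j.

Definition leader_payoff (f x : nat -> R) (i : nat) : R :=
  (P (total f x) - C) * x i.

Definition forward_NE (f x : nat -> R) : Prop :=
  (forall i, (i < M)%nat -> 0 <= x i) /\
  (forall j, (j < N)%nat -> forall v : R,
      follower_payoff (upd f j v) x j <= follower_payoff f x j) /\
  (forall i, (i < M)%nat -> forall v : R, 0 <= v ->
      leader_payoff f (upd x i v) i <= leader_payoff f x i).

Definition inQ (f x : R) : Prop := 0 <= x /\ forward_NE (cst f) (cst x).

(* x in X(0): symmetric Stackelberg equilibria *)
Definition inX0 (x : R) : Prop :=
  0 <= x /\
  forall xb : R, 0 <= xb -> forall i, (i < M)%nat ->
    leader_payoff (cst 0) (upd (cst x) i xb) i <= leader_payoff (cst 0) (cst x) i.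

(* social welfare; int_0^Q P(w) dw = alpha Q - beta Q^2 / 2 *)
Definition SW (y x : R) : R :=
  let Qt := INR M * x + INR N * y in
  alpha * Qt - beta * Qt ^ 2 / 2 - (INR M * C * x + INR N * c * y).

End Model.

(* Write a for alpha_x; the hypothesis forces c = C. The spot market is a monotone game, so
   its equilibrium is unique and can be read off from the followers' clipped first-order
   conditions. In the forward equilibrium the followers sell their capacity k forward and
   produce k, the leaders produce (a - N k)/(M + 1), and no deviation pays once
   a >= (M + N + 1) k. Without forward trading the Stackelberg leaders produce a/(M + 1) and
   the followers a/((M + 1)(N + 1)); the only dangerous deviation floods the market until the
   followers are capacity-bound, and it is unprofitable as long as a is at most the upper end
   of the interval. Welfare is beta/2 * q (2a - q), increasing in total output q <= a, and the
   forward output is smaller; both ratios decrease in k, hence are largest, and equal to the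
   stated bounds, when k is smallest, i.e. at the upper end of the interval. *)

From Stdlib Require Import Reals Lra Lia Psatz ClassicalEpsilon.
Open Scope R_scope.

Lemma sumR_ext n g h : (forall i, (i < n)%nat -> g i = h i) -> sumR n g = sumR n h.
Proof.
  induction n as [|n IH]; intros Hgh; simpl; [reflexivity|].
  rewrite IH, Hgh; [reflexivity|lia|intros; apply Hgh; lia].
Qed.

Lemma sumR_cst n a : sumR n (cst a) = INR n * a.
Proof.
  induction n as [|n IH]; simpl sumR; [simpl; ring|].
  rewrite IH, S_INR. unfold cst. ring.
Qed.

Lemma sumR_lin n a b g h :
  sumR n (fun i => a * g i + b * h i) = a * sumR n g + b * sumR n h.
Proof. induction n as [|n IH]; simpl; [ring|]. rewrite IH. ring. Qed.

Lemma upd_same g j v : upd g j v j = v.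
Proof. unfold upd. rewrite Nat.eqb_refl. reflexivity. Qed.

Lemma upd_other g j v i : i <> j -> upd g j v i = g i.
Proof. intros Hij. unfold upd. destruct (Nat.eqb_spec i j); [contradiction|reflexivity]. Qed.

Lemma sumR_upd n g j v : (j < n)%nat -> sumR n (upd g j v) = sumR n g - g j + v.
Proof.
  induction n as [|n IH]; intros Hj; [lia|]. simpl.
  destruct (Nat.eq_dec j n) as [->|Hjn].
  - rewrite (sumR_ext n (upd g n v) g), upd_same; [ring|].
    intros i Hi. apply upd_other. lia.
  - rewrite IH, upd_other by lia. ring.
Qed.

Lemma sumR_le n g h : (forall i, (i < n)%nat -> g i <= h i) -> sumR n g <= sumR n h.
Proof.
  induction n as [|n IH]; intros Hgh; simpl; [lra|].
  assert (sumR n g <= sumR n h) by (apply IH; intros; apply Hgh; lia).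
  assert (g n <= h n) by (apply Hgh; lia). lra.
Qed.

Lemma sumR_nonneg n g : (forall i, (i < n)%nat -> 0 <= g i) -> 0 <= sumR n g.
Proof.
  intros Hg. rewrite <- (Rmult_0_r (INR n)), <- sumR_cst.
  apply sumR_le. exact Hg.
Qed.

Lemma sumR_nonneg_eq0 n g :
  (forall i, (i < n)%nat -> 0 <= g i) -> sumR n g <= 0 -> forall i, (i < n)%nat -> g i = 0.
Proof.
  induction n as [|n IH]; intros Hg Hsum i Hi; [lia|]. simpl in Hsum.
  assert (0 <= sumR n g) by (apply sumR_nonneg; intros; apply Hg; lia).
  assert (0 <= g n) by (apply Hg; lia).
  destruct (Nat.eq_dec i n) as [->|Hin]; [lra|].
  apply IH; [intros; apply Hg; lia|lra|lia].
Qed.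

(* [t] is [E / L] clipped to [[0, k]], stated by cases to avoid dividing by [L]; for [L > 0]
   it is the maximiser of [v * (E - L * v / 2)] on [[0, k]] (see [clip_sol_argmax]). *)
Definition clip_sol (k L E t : R) : Prop :=
  0 <= t <= k /\ ((t = k /\ L * k <= E) \/ L * t = E \/ (t = 0 /\ E <= 0)).

Lemma clip_sol_exists k L E : 0 <= k -> 0 < L -> exists t, clip_sol k L E t.
Proof.
  intros Hk HL. unfold clip_sol.
  destruct (Rle_lt_dec (L * k) E) as [Hcap|Hcap].
  { exists k. split; [lra|]. left. split; [reflexivity|exact Hcap]. }
  destruct (Rle_lt_dec E 0) as [Hneg|Hpos].
  { exists 0. split; [lra|]. right; right. split; [reflexivity|exact Hneg]. }
  exists (E / L). split.
  - split.
    + apply Rlt_le, Rdiv_lt_0_compat; assumption.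
    + apply Rlt_le, (Rmult_lt_reg_l L); [exact HL|]. field_simplify; lra.
  - right; left. field. lra.
Qed.

Lemma clip_sol_cap_or_le k L E t : clip_sol k L E t -> t = k \/ E <= L * t.
Proof. intros [_ [[-> _]|[Hint|[-> Hneg]]]]; [left; reflexivity|right; lra|right; lra]. Qed.

Lemma clip_sol_affine k L E t b D :
  0 < b -> clip_sol k L E t -> clip_sol k (b * (L - D)) (b * (E - D * t)) t.
Proof.
  intros Hb [Ht Hcases]. split; [exact Ht|].
  destruct Hcases as [[-> Hcap]|[Hint|[-> Hneg]]].
  - left. split; [reflexivity|]. nra.
  - right; left. rewrite <- Hint. ring.
  - right; right. split; [reflexivity|]. nra.
Qed.

Lemma clip_sol_argmax k b E t v :
  0 < b -> clip_sol k (2 * b) E t -> 0 <= v <= k -> v * (E - b * v) <= t * (E - b * t).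
Proof.
  intros Hb [Ht Hcases] Hv.
  assert (Hgain : v * (E - b * v) - t * (E - b * t) = (v - t) * (E - b * (v + t))) by ring.
  enough ((v - t) * (E - b * (v + t)) <= 0) by lra.
  destruct Hcases as [[-> Hcap]|[Hint|[-> Hneg]]].
  - assert (0 <= E - b * (v + k)) by nra. nra.
  - replace (E - b * (v + t)) with (- b * (v - t)) by lra.
    assert (0 <= b * ((v - t) * (v - t))) by (apply Rmult_le_pos; [lra|apply Rle_0_sqr]).
    lra.
  - nra.
Qed.

Lemma sqrt_succ_spec n : 0 < n -> 1 < sqrt (n + 1) /\ sqrt (n + 1) * sqrt (n + 1) = n + 1.
Proof.
  intros Hn. assert (Hsq : sqrt (n + 1) * sqrt (n + 1) = n + 1) by (apply sqrt_sqrt; lra).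
  assert (0 < sqrt (n + 1)) by (apply sqrt_lt_R0; lra).
  split; [nra|exact Hsq].
Qed.

Lemma Rdiv_le_contravar x y z : 0 <= x -> 0 < y -> y <= z -> x / z <= x / y.
Proof.
  intros Hx Hy Hyz. apply Rmult_le_compat_l; [exact Hx|]. apply Rinv_le_contravar; assumption.
Qed.

Definition surplus (a q : R) : R := q * (2 * a - q).

Lemma surplus_lt_mono a q q' : q < q' -> q' <= a -> surplus a q < surplus a q'.
Proof. intros Hq Hq'. unfold surplus. nra. Qed.

Lemma surplus_le_mono a q q' : q <= q' -> q' <= a -> surplus a q <= surplus a q'.
Proof. intros Hq Hq'. unfold surplus. nra. Qed.

Lemma surplus_pos a q : 0 < q -> q < a -> 0 < surplus a q.
Proof. intros Hq Hqa. unfold surplus. nra. Qed.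

(* This is where [alpha_x_hi] comes from: a Stackelberg leader who floods the market until
   the followers are at capacity earns at most [B^2 / 4] with [B = 2 xS - n k] (AM-GM), and
   [sqrt (n + 1) * B <= 2 xS] is the hypothesis on [xS]. *)
Lemma capacity_deviation_bound n k xS xb :
  0 < n -> 0 <= k -> 0 <= xb ->
  2 * xS * (sqrt (n + 1) - 1) <= sqrt (n + 1) * n * k ->
  (n + 1) * k <= 2 * xS - xb ->
  (n + 1) * ((2 * xS - xb - n * k) * xb) <= xS * xS.
Proof.
  intros Hn Hk Hxb Hhi Hcap.
  destruct (sqrt_succ_spec n Hn) as [Hs1 Hs]. set (s := sqrt (n + 1)) in *.
  set (B := 2 * xS - n * k).
  assert (HsB : s * B <= 2 * xS) by (unfold B; nra).
  assert (HB : 0 <= s * B) by (apply Rmult_le_pos; [lra|unfold B; lra]).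
  assert (Hamgm : 4 * (xb * (B - xb)) <= B * B)
    by (pose proof (Rle_0_sqr (B - 2 * xb)); unfold Rsqr in *; lra).
  replace (2 * xS - xb - n * k) with (B - xb) by (unfold B; ring).
  assert (Hsq : (s * B) * (s * B) <= (2 * xS) * (2 * xS)) by (apply Rmult_le_compat; lra).
  assert (Hs2 : s * s * (4 * (xb * (B - xb))) <= s * s * (B * B))
    by (apply Rmult_le_compat_l; nra).
  rewrite <- Hs. nra.
Qed.

Lemma stackelberg_deviation_bound n k xS xb t :
  0 < n -> 0 <= k -> 0 <= xb ->
  2 * xS * (sqrt (n + 1) - 1) <= sqrt (n + 1) * n * k ->
  clip_sol k (n + 1) (2 * xS - xb) t ->
  (n + 1) * ((2 * xS - xb - n * t) * xb) <= xS * xS.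
Proof.
  intros Hn Hk Hxb Hhi [Ht [[-> Hcap]|[Hint|[-> Hneg]]]].
  - exact (capacity_deviation_bound n k xS xb Hn Hk Hxb Hhi Hcap).
  - replace (2 * xS - xb - n * t) with t by lra.
    rewrite <- Rmult_assoc, Hint. pose proof (Rle_0_sqr (xS - xb)). unfold Rsqr in *. nra.
  - assert (0 <= (n + 1) * (- (2 * xS - xb - n * 0) * xb))
      by (apply Rmult_le_pos; [lra|apply Rmult_le_pos; lra]).
    pose proof (Rle_0_sqr xS). unfold Rsqr in *. lra.
Qed.

Definition alpha_x_lo (m n k : R) : R := (m + n + 1) * k.
Definition alpha_x_hi (m n k : R) : R :=
  (m + 1) * sqrt (n + 1) / (2 * (sqrt (n + 1) - 1)) * n * k.
Definition output_ratio_bound (m n : R) : R :=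
  (m * n + m + n) * (m + 1) / (m * (m + 1) * (n + 1) + 2 * (n + 1 - sqrt (n + 1))).
Definition welfare_ratio_bound (m n : R) : R :=
  (m + 1) ^ 2 * (m * n + m + n) * (m * n + m + n + 2)
  / ((n + 1) * ((m ^ 2 + m + 2) * sqrt (n + 1) - 2) * ((m ^ 2 + 3 * m) * sqrt (n + 1) + 2)).

Lemma alpha_x_hi_spec m n k : 0 < n ->
  2 * alpha_x_hi m n k * (sqrt (n + 1) - 1) = (m + 1) * sqrt (n + 1) * n * k.
Proof.
  intros Hn. destruct (sqrt_succ_spec n Hn) as [Hs1 _]. unfold alpha_x_hi. field. lra.
Qed.

Lemma le_alpha_x_hi m n k a : 0 < n ->
  a <= alpha_x_hi m n k <-> 2 * a * (sqrt (n + 1) - 1) <= (m + 1) * sqrt (n + 1) * n * k.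
Proof.
  intros Hn. destruct (sqrt_succ_spec n Hn) as [Hs1 _].
  rewrite <- (alpha_x_hi_spec m n k Hn). split; intros H; nra.
Qed.

Lemma alpha_x_lo_le_hi m n k : 1 <= m -> 1 <= n -> 0 < k -> alpha_x_lo m n k <= alpha_x_hi m n k.
Proof.
  intros Hm Hn Hk. apply le_alpha_x_hi; [lra|].
  destruct (sqrt_succ_spec n ltac:(lra)) as [Hs1 Hs]. set (s := sqrt (n + 1)) in *.
  unfold alpha_x_lo.
  assert (Hgap : (m + 1) * s * n * k - 2 * ((m + n + 1) * k) * (s - 1)
                 = k * ((s - 1) * (s - 1)) * (m * (s + 2) - s))
    by (replace n with (s * s - 1) by lra; ring).
  assert (0 <= k * ((s - 1) * (s - 1)) * (m * (s + 2) - s))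
    by (apply Rmult_le_pos; [apply Rmult_le_pos; nra|nra]).
  lra.
Qed.

Section OutputComparison.
Variables (m n k a : R).
Hypotheses (Hm : 0 < m) (Hn : 0 < n) (Hk : 0 < k)
  (Hlo : (m + n + 1) * k <= a)
  (Hhi : 2 * a * (sqrt (n + 1) - 1) <= (m + 1) * sqrt (n + 1) * n * k).

Definition forward_quantity : R := m * ((a - n * k) / (m + 1)) + n * k.
Definition stackelberg_quantity : R := m * (a / (m + 1)) + n * (a / ((m + 1) * (n + 1))).
(* [forward_quantity] at the smallest capacity allowed by [Hhi], i.e. when [a = alpha_x_hi] *)
Definition forward_quantity_min : R :=
  a * ((m ^ 2 + m + 2) * sqrt (n + 1) - 2) / ((m + 1) ^ 2 * sqrt (n + 1)).

Let Ha : 0 < a. Proof. nra. Qed.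

Lemma forward_quantity_gap :
  forward_quantity - forward_quantity_min
  = ((m + 1) * sqrt (n + 1) * n * k - 2 * a * (sqrt (n + 1) - 1)) / ((m + 1) ^ 2 * sqrt (n + 1)).
Proof.
  destruct (sqrt_succ_spec n Hn) as [Hs1 _].
  unfold forward_quantity, forward_quantity_min. field. lra.
Qed.

Lemma forward_quantity_min_pos : 0 < forward_quantity_min.
Proof.
  destruct (sqrt_succ_spec n Hn) as [Hs1 _].
  unfold forward_quantity_min. apply Rdiv_lt_0_compat; [|nra].
  apply Rmult_lt_0_compat; [exact Ha|nra].
Qed.

Lemma forward_quantity_min_le : forward_quantity_min <= forward_quantity.
Proof.
  destruct (sqrt_succ_spec n Hn) as [Hs1 _].
  enough (0 <= forward_quantity - forward_quantity_min) by lra.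
  rewrite forward_quantity_gap. apply Rmult_le_pos; [lra|].
  apply Rlt_le, Rinv_0_lt_compat. nra.
Qed.

Lemma forward_lt_stackelberg_quantity : forward_quantity < stackelberg_quantity.
Proof.
  assert (Hgap : stackelberg_quantity - forward_quantity
                 = n * (a - (n + 1) * k) / ((m + 1) * (n + 1)))
    by (unfold stackelberg_quantity, forward_quantity; field; lra).
  enough (0 < n * (a - (n + 1) * k) / ((m + 1) * (n + 1))) by lra.
  apply Rdiv_lt_0_compat; apply Rmult_lt_0_compat; nra.
Qed.

Lemma stackelberg_quantity_lt : stackelberg_quantity < a.
Proof.
  assert (Hgap : a - stackelberg_quantity = a / ((m + 1) * (n + 1)))
    by (unfold stackelberg_quantity; field; lra).
  enough (0 < a / ((m + 1) * (n + 1))) by lra.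
  apply Rdiv_lt_0_compat; [exact Ha|nra].
Qed.

Lemma output_ratio_bound_eq :
  output_ratio_bound m n = stackelberg_quantity / forward_quantity_min.
Proof.
  destruct (sqrt_succ_spec n Hn) as [Hs1 Hs]. unfold output_ratio_bound.
  unfold stackelberg_quantity, forward_quantity_min. set (s := sqrt (n + 1)) in *.
  replace n with (s * s - 1) by lra. field.
  repeat split; nra.
Qed.

Lemma welfare_ratio_bound_eq :
  welfare_ratio_bound m n
  = surplus a stackelberg_quantity / surplus a forward_quantity_min.
Proof.
  destruct (sqrt_succ_spec n Hn) as [Hs1 Hs]. unfold welfare_ratio_bound, surplus.
  unfold stackelberg_quantity, forward_quantity_min. set (s := sqrt (n + 1)) in *.
  replace n with (s * s - 1) by lra. field.
  replace (2 * a * ((m + 1) ^ 2 * s) - a * ((m ^ 2 + m + 2) * s - 2))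
    with (a * ((m ^ 2 + 3 * m) * s + 2)) by ring.
  assert (0 < a * ((m ^ 2 + 3 * m) * s + 2)) by (apply Rmult_lt_0_compat; nra).
  repeat split; try lra; nra.
Qed.

Lemma output_ratio_le : stackelberg_quantity / forward_quantity <= output_ratio_bound m n.
Proof.
  rewrite output_ratio_bound_eq. apply Rdiv_le_contravar.
  - pose proof forward_lt_stackelberg_quantity. pose proof forward_quantity_min_pos.
    pose proof forward_quantity_min_le. lra.
  - exact forward_quantity_min_pos.
  - exact forward_quantity_min_le.
Qed.

Lemma welfare_ratio_le :
  surplus a stackelberg_quantity / surplus a forward_quantity <= welfare_ratio_bound m n.
Proof.
  pose proof forward_quantity_min_pos. pose proof forward_quantity_min_le.
  pose proof forward_lt_stackelberg_quantity. pose proof stackelberg_quantity_lt.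
  rewrite welfare_ratio_bound_eq. apply Rdiv_le_contravar.
  - apply Rlt_le, surplus_pos; lra.
  - apply surplus_pos; lra.
  - apply surplus_le_mono; lra.
Qed.

Lemma forward_quantity_at_hi :
  2 * a * (sqrt (n + 1) - 1) = (m + 1) * sqrt (n + 1) * n * k ->
  forward_quantity = forward_quantity_min.
Proof.
  intros Heq. pose proof forward_quantity_gap as Hgap. rewrite Heq in Hgap.
  unfold Rdiv in Hgap. rewrite Rminus_diag, Rmult_0_l in Hgap. lra.
Qed.

End OutputComparison.

Section SpotMarket.
Variables (M N : nat) (alpha beta c k : R).
Hypothesis Hbeta : 0 < beta.

Definition spot_margin (f x y : nat -> R) (j : nat) : R :=
  alpha - beta * (sumR M x + sumR N y - y j) + beta * f j - c.

Lemma spot_payoff_gain f x y j v : (j < N)%nat ->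
  spot_payoff M N alpha beta c f x (upd y j v) j - spot_payoff M N alpha beta c f x y j
  = v * (spot_margin f x y j - beta * v) - y j * (spot_margin f x y j - beta * y j).
Proof.
  intros Hj. unfold spot_payoff, spot_margin, P.
  rewrite sumR_upd by exact Hj. rewrite upd_same. ring.
Qed.

Lemma spot_NE_of_clip f x y :
  (forall j, (j < N)%nat -> clip_sol k (2 * beta) (spot_margin f x y j) (y j)) ->
  spot_NE M N alpha beta c k f x y.
Proof.
  intros Hy. split.
  - intros j Hj. apply (Hy j Hj).
  - intros j Hj v Hv.
    pose proof (clip_sol_argmax _ _ _ _ v Hbeta (Hy j Hj) Hv).
    pose proof (spot_payoff_gain f x y j v Hj). lra.
Qed.

(* Deviating a quarter of the way towards the other equilibrium and adding the two
   no-gain conditions cancels everything but the monotone part of the game. *)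
Lemma spot_NE_monotone f x y y' j :
  spot_NE M N alpha beta c k f x y -> spot_NE M N alpha beta c k f x y' -> (j < N)%nat ->
  (y' j - y j) * (sumR N y' - sumR N y) + (y' j - y j) ^ 2 / 2 <= 0.
Proof.
  intros [Hb Hbr] [Hb' Hbr'] Hj.
  destruct (Hb j Hj) as [Hy0 Hyk], (Hb' j Hj) as [Hy0' Hyk'].
  pose proof (Hbr j Hj (y j + (y' j - y j) / 4) ltac:(lra)) as Hgain.
  pose proof (Hbr' j Hj (y' j - (y' j - y j) / 4) ltac:(lra)) as Hgain'.
  pose proof (spot_payoff_gain f x y j (y j + (y' j - y j) / 4) Hj) as Egain.
  pose proof (spot_payoff_gain f x y' j (y' j - (y' j - y j) / 4) Hj) as Egain'.
  assert (Hsum : beta / 4 * ((y' j - y j) * (sumR N y' - sumR N y) + (y' j - y j) ^ 2 / 2)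
    = ((y j + (y' j - y j) / 4) * (spot_margin f x y j - beta * (y j + (y' j - y j) / 4))
         - y j * (spot_margin f x y j - beta * y j))
      + ((y' j - (y' j - y j) / 4) * (spot_margin f x y' j - beta * (y' j - (y' j - y j) / 4))
         - y' j * (spot_margin f x y' j - beta * y' j)))
    by (unfold spot_margin; field).
  apply (Rmult_le_reg_l (beta / 4)); lra.
Qed.

Lemma spot_NE_unique f x y y' :
  spot_NE M N alpha beta c k f x y -> spot_NE M N alpha beta c k f x y' ->
  forall j, (j < N)%nat -> y j = y' j.
Proof.
  intros Hy Hy'. set (D := sumR N y' - sumR N y).
  assert (HD : sumR N (fun j => y' j - y j) = D)
    by (rewrite (sumR_ext N _ (fun j => 1 * y' j + -1 * y j)) by (intros; ring);
        rewrite sumR_lin; unfold D; ring).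
  assert (Hsum : D * D + sumR N (fun j => (y' j - y j) ^ 2) / 2 <= 0).
  { replace (D * D + sumR N (fun j => (y' j - y j) ^ 2) / 2)
      with (sumR N (fun j => D * (y' j - y j) + / 2 * (y' j - y j) ^ 2))
      by (rewrite sumR_lin, HD; field).
    rewrite <- (Rmult_0_r (INR N)), <- sumR_cst. apply sumR_le. intros j Hj.
    unfold cst. pose proof (spot_NE_monotone f x y y' j Hy Hy' Hj) as Hmono.
    fold D in Hmono. lra. }
  assert (Hsq : forall j, (j < N)%nat -> 0 <= (y' j - y j) ^ 2) by (intros; apply pow2_ge_0).
  assert (Hsq0 : sumR N (fun j => (y' j - y j) ^ 2) <= 0)
    by (pose proof (sumR_nonneg _ _ Hsq); nra).
  intros j Hj. pose proof (sumR_nonneg_eq0 _ _ Hsq Hsq0 j Hj). nra.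
Qed.

Lemma yspot_spec f x y : spot_NE M N alpha beta c k f x y ->
  forall j, (j < N)%nat -> yspot M N alpha beta c k f x j = y j.
Proof.
  intros Hy j Hj. unfold yspot. apply (spot_NE_unique f x); [|exact Hy|exact Hj].
  exact (epsilon_spec (inhabits (cst 0)) _ (ex_intro _ y Hy)).
Qed.

Lemma total_eq f x y : (forall j, (j < N)%nat -> yspot M N alpha beta c k f x j = y j) ->
  total M N alpha beta c k f x = sumR M x + sumR N y.
Proof. intros Hy. unfold total. rewrite (sumR_ext N _ _ Hy). reflexivity. Qed.

Lemma yspot_cst F x t :
  clip_sol k (INR N + 1) ((alpha - c) / beta - sumR M x + F) t ->
  forall j, (j < N)%nat -> yspot M N alpha beta c k (cst F) x j = t.
Proof.
  intros Ht. apply (yspot_spec _ _ (cst t)), spot_NE_of_clip. intros j _.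
  replace (spot_margin (cst F) x (cst t) j)
    with (beta * (((alpha - c) / beta - sumR M x + F) - (INR N - 1) * t))
    by (unfold spot_margin; rewrite sumR_cst; unfold cst; field; lra).
  replace (2 * beta) with (beta * ((INR N + 1) - (INR N - 1))) by ring.
  apply clip_sol_affine; assumption.
Qed.

Lemma yspot_upd_cst F x j0 v w : (j0 < N)%nat ->
  clip_sol k 2 ((alpha - c) / beta - sumR M x - (INR N - 1) * k + v) w ->
  2 * k <= (alpha - c) / beta - sumR M x - (INR N - 2) * k - w + F ->
  forall i, (i < N)%nat -> yspot M N alpha beta c k (upd (cst F) j0 v) x i = upd (cst k) j0 w i.
Proof.
  intros Hj0 Hw Hothers. apply yspot_spec, spot_NE_of_clip. intros j Hj.
  assert (Hsum : sumR N (upd (cst k) j0 w) = INR N * k - k + w)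
    by (rewrite sumR_upd, sumR_cst by exact Hj0; reflexivity).
  unfold spot_margin. rewrite Hsum.
  destruct (Nat.eq_dec j j0) as [->|Hjj0].
  - rewrite !upd_same.
    replace (alpha - beta * (sumR M x + (INR N * k - k + w) - w) + beta * v - c)
      with (beta * (((alpha - c) / beta - sumR M x - (INR N - 1) * k + v) - 0 * w))
      by (field; lra).
    replace (2 * beta) with (beta * (2 - 0)) by ring.
    apply clip_sol_affine; assumption.
  - rewrite !upd_other by exact Hjj0. unfold cst.
    destruct Hw as [Hw _]. split; [lra|]. left. split; [reflexivity|].
    replace (alpha - beta * (sumR M x + (INR N * k - k + w) - k) + beta * F - c)
      with (beta * ((alpha - c) / beta - sumR M x - (INR N - 2) * k - w + F))
      by (field; lra).
    nra.
Qed.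

End SpotMarket.

Section Market.
Variables (M N : nat) (alpha beta C k a : R).
Hypotheses (Hbeta : 0 < beta) (Hk : 0 < k) (Ha : (alpha - C) / beta = a).

Lemma price_margin q : P alpha beta q - C = beta * (a - q).
Proof. unfold P. rewrite <- Ha. field. lra. Qed.

Lemma SW_surplus y x :
  SW M N alpha beta C C y x = beta / 2 * surplus a (INR M * x + INR N * y).
Proof. unfold SW, surplus. rewrite <- Ha. field. lra. Qed.

Section Forward.
Hypothesis Hlo : (INR M + INR N + 1) * k <= a.

Definition forward_output : R := (a - INR N * k) / (INR M + 1).

Lemma forward_output_residual : a - INR M * forward_output - INR N * k = forward_output.
Proof. pose proof (pos_INR M). unfold forward_output. field. lra. Qed.

Lemma k_le_forward_output : k <= forward_output.
Proof.
  pose proof (pos_INR M). pose proof forward_output_residual.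
  apply (Rmult_le_reg_l (INR M + 1)); lra.
Qed.

Lemma yspot_forward F : 0 <= F ->
  forall j, (j < N)%nat -> yspot M N alpha beta C k (cst F) (cst forward_output) j = k.
Proof.
  intros HF. pose proof forward_output_residual. pose proof k_le_forward_output.
  apply yspot_cst; [exact Hbeta|]. rewrite Ha, sumR_cst.
  split; [lra|]. left. split; [reflexivity|lra].
Qed.

Lemma forward_follower_no_gain F j v : 0 <= F -> (j < N)%nat ->
  follower_payoff M N alpha beta C k (upd (cst F) j v) (cst forward_output) j
  <= follower_payoff M N alpha beta C k (cst F) (cst forward_output) j.
Proof.
  intros HF Hj. pose proof forward_output_residual as Hres.
  pose proof k_le_forward_output as Hx0. pose proof (yspot_forward F HF) as Hfwd.
  set (x0 := forward_output) in *.
  destruct (clip_sol_exists k 2 (a - INR M * x0 - (INR N - 1) * k + v)) as [w Hw];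
    [lra|lra|].
  assert (Hdev : forall i, (i < N)%nat ->
            yspot M N alpha beta C k (upd (cst F) j v) (cst x0) i = upd (cst k) j w i).
  { destruct Hw as [Hw01 Hw'].
    apply yspot_upd_cst; [exact Hbeta|exact Hj| |]; rewrite Ha, sumR_cst;
      [split; assumption|lra]. }
  unfold follower_payoff.
  rewrite (total_eq _ _ _ _ _ _ _ _ _ Hdev), (total_eq _ _ _ _ _ _ _ _ (cst k) Hfwd).
  rewrite Hdev, Hfwd, upd_same, sumR_upd, !sumR_cst, !price_margin by assumption.
  unfold cst. destruct Hw as [Hw01 _].
  assert (0 <= beta * ((k - w) * (x0 - w)))
    by (apply Rmult_le_pos; [lra|apply Rmult_le_pos; lra]).
  replace (a - (INR M * x0 + (INR N * k - k + w))) with (x0 + k - w) by lra.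
  replace (a - (INR M * x0 + INR N * k)) with x0 by lra.
  lra.
Qed.

Lemma forward_leader_no_gain F i v : k <= F -> (i < M)%nat -> 0 <= v ->
  leader_payoff M N alpha beta C C k (cst F) (upd (cst forward_output) i v) i
  <= leader_payoff M N alpha beta C C k (cst F) (cst forward_output) i.
Proof.
  intros HF Hi Hv. pose proof forward_output_residual as Hres.
  pose proof k_le_forward_output as Hx0. pose proof (yspot_forward F ltac:(lra)) as Hfwd.
  set (x0 := forward_output) in *.
  destruct (clip_sol_exists k (INR N + 1) (a - (INR M * x0 - x0 + v) + F)) as [t Ht];
    [lra|pose proof (pos_INR N); lra|].
  assert (Hdev : forall j, (j < N)%nat ->
            yspot M N alpha beta C k (cst F) (upd (cst x0) i v) j = t).
  { apply yspot_cst; [exact Hbeta|]. rewrite Ha, sumR_upd, sumR_cst by exact Hi. exact Ht. }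
  unfold leader_payoff.
  rewrite (total_eq _ _ _ _ _ _ _ _ (cst t) Hdev),
    (total_eq _ _ _ _ _ _ _ _ (cst k) Hfwd).
  rewrite upd_same, sumR_upd, !sumR_cst, !price_margin by exact Hi. unfold cst.
  replace (a - (INR M * x0 + INR N * k)) with x0 by lra.
  assert (Hsq : 0 <= beta * ((x0 - v) * (x0 - v)))
    by (apply Rmult_le_pos; [lra|apply Rle_0_sqr]).
  destruct (clip_sol_cap_or_le _ _ _ _ Ht) as [->|Hbelow].
  - replace (a - (INR M * x0 - x0 + v + INR N * k)) with (2 * x0 - v) by lra. lra.
  - (* Below capacity the followers' first-order condition caps the margin at [t - F <= 0]. *)
    destruct Ht as [[_ Htk] _].
    assert (0 <= beta * (- (a - (INR M * x0 - x0 + v + INR N * t))) * v)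
      by (apply Rmult_le_pos; [apply Rmult_le_pos|]; lra).
    assert (0 <= beta * x0 * x0) by (apply Rmult_le_pos; [apply Rmult_le_pos|]; lra).
    lra.
Qed.

Lemma inQ_forward F : k <= F -> inQ M N alpha beta C C k F forward_output.
Proof.
  intros HF. pose proof k_le_forward_output. split; [lra|]. split; [|split].
  - intros i _. unfold cst. lra.
  - intros j Hj v. apply forward_follower_no_gain; [lra|exact Hj].
  - intros i Hi v Hv. apply forward_leader_no_gain; assumption.
Qed.

End Forward.

Section Stackelberg.
Hypotheses (HN : (0 < N)%nat) (Ha0 : 0 <= a)
  (Hhi : 2 * a * (sqrt (INR N + 1) - 1) <= (INR M + 1) * sqrt (INR N + 1) * INR N * k).

Definition stackelberg_output : R := a / (INR M + 1).
Definition stackelberg_follower_output : R := a / ((INR M + 1) * (INR N + 1)).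

Lemma stackelberg_output_residual : a - INR M * stackelberg_output = stackelberg_output.
Proof. pose proof (pos_INR M). unfold stackelberg_output. field. lra. Qed.

Lemma stackelberg_follower_output_eq :
  (INR N + 1) * stackelberg_follower_output = stackelberg_output.
Proof.
  pose proof (pos_INR M). pose proof (pos_INR N).
  unfold stackelberg_output, stackelberg_follower_output. field. lra.
Qed.

Lemma stackelberg_output_hi :
  2 * stackelberg_output * (sqrt (INR N + 1) - 1) <= sqrt (INR N + 1) * INR N * k.
Proof.
  pose proof (pos_INR M). apply (Rmult_le_reg_l (INR M + 1)); [lra|].
  unfold stackelberg_output.
  replace ((INR M + 1) * (2 * (a / (INR M + 1)) * (sqrt (INR N + 1) - 1)))
    with (2 * a * (sqrt (INR N + 1) - 1)) by (field; lra).
  lra.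
Qed.

Lemma stackelberg_follower_output_le : stackelberg_follower_output <= k.
Proof.
  pose proof (lt_0_INR N HN) as Hn. pose proof stackelberg_output_hi as Hxs.
  pose proof stackelberg_follower_output_eq as Hts.
  destruct (sqrt_succ_spec (INR N) Hn) as [Hs1 Hs]. set (s := sqrt (INR N + 1)) in *.
  set (xS := stackelberg_output) in *.
  assert (Hfac : s * INR N * k = (s - 1) * (s * (s + 1) * k)) by (rewrite <- Hs in *; nra).
  assert (2 * xS <= s * (s + 1) * k) by nra.
  assert (0 <= s * k * (s - 1)) by (apply Rmult_le_pos; [apply Rmult_le_pos|]; lra).
  assert (xS <= (INR N + 1) * k) by (rewrite <- Hs; lra).
  apply (Rmult_le_reg_l (INR N + 1)); lra.
Qed.

Lemma yspot_stackelberg : forall j, (j < N)%nat ->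
  yspot M N alpha beta C k (cst 0) (cst stackelberg_output) j = stackelberg_follower_output.
Proof.
  pose proof stackelberg_output_residual. pose proof stackelberg_follower_output_eq.
  pose proof stackelberg_follower_output_le.
  assert (0 <= stackelberg_follower_output).
  { unfold stackelberg_follower_output. pose proof (pos_INR M). pose proof (pos_INR N).
    apply Rmult_le_pos; [lra|]. apply Rlt_le, Rinv_0_lt_compat. nra. }
  apply yspot_cst; [exact Hbeta|]. rewrite Ha, sumR_cst.
  split; [lra|]. right; left. lra.
Qed.

Lemma stackelberg_leader_no_gain i xb : (i < M)%nat -> 0 <= xb ->
  leader_payoff M N alpha beta C C k (cst 0) (upd (cst stackelberg_output) i xb) i
  <= leader_payoff M N alpha beta C C k (cst 0) (cst stackelberg_output) i.
Proof.
  intros Hi Hxb. pose proof (lt_0_INR N HN) as Hn.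
  pose proof stackelberg_output_residual as Hres.
  pose proof stackelberg_follower_output_eq as Hts.
  pose proof yspot_stackelberg as HyS.
  set (xS := stackelberg_output) in *. set (tS := stackelberg_follower_output) in *.
  destruct (clip_sol_exists k (INR N + 1) (2 * xS - xb)) as [t Ht]; [lra|lra|].
  assert (Hdev : forall j, (j < N)%nat ->
            yspot M N alpha beta C k (cst 0) (upd (cst xS) i xb) j = t).
  { apply yspot_cst; [exact Hbeta|]. rewrite Ha, sumR_upd, sumR_cst by exact Hi.
    unfold cst. replace (a - (INR M * xS - xS + xb) + 0) with (2 * xS - xb) by lra. exact Ht. }
  unfold leader_payoff.
  rewrite (total_eq _ _ _ _ _ _ _ _ (cst t) Hdev),
    (total_eq _ _ _ _ _ _ _ _ (cst tS) HyS).
  rewrite upd_same, sumR_upd, !sumR_cst, !price_margin by exact Hi. unfold cst.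
  replace (a - (INR M * xS - xS + xb + INR N * t)) with (2 * xS - xb - INR N * t) by lra.
  replace (a - (INR M * xS + INR N * tS)) with tS by lra.
  replace (beta * tS * xS) with (beta * (xS * xS / (INR N + 1)))
    by (rewrite <- Hts; field; lra).
  rewrite Rmult_assoc. apply Rmult_le_compat_l; [lra|].
  apply (Rmult_le_reg_l (INR N + 1)); [lra|].
  replace ((INR N + 1) * (xS * xS / (INR N + 1))) with (xS * xS) by (field; lra).
  apply (stackelberg_deviation_bound _ k);
    [exact Hn|lra|exact Hxb|exact stackelberg_output_hi|exact Ht].
Qed.

Lemma inX0_stackelberg : inX0 M N alpha beta C C k stackelberg_output.
Proof.
  split.
  - unfold stackelberg_output. pose proof (pos_INR M).
    apply Rmult_le_pos; [lra|]. apply Rlt_le, Rinv_0_lt_compat. lra.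
  - intros xb Hxb i Hi. apply stackelberg_leader_no_gain; assumption.
Qed.

End Stackelberg.
End Market.

Lemma outcome_comparison (M N : nat) (alpha beta C k : R) :
  (0 < M)%nat -> (0 < N)%nat -> 0 < beta -> 0 < k ->
  alpha_x_lo (INR M) (INR N) k <= (alpha - C) / beta <= alpha_x_hi (INR M) (INR N) k ->
  exists f x xS : R,
    inQ M N alpha beta C C k f x /\ inX0 M N alpha beta C C k xS /\
    forall j, (j < N)%nat ->
      let y := yspot M N alpha beta C k (cst f) (cst x) j in
      let yS := yspot M N alpha beta C k (cst 0) (cst xS) j in
      let Q := INR M * x + INR N * y in
      let QS := INR M * xS + INR N * yS in
      let SW_ratio := SW M N alpha beta C C yS xS / SW M N alpha beta C C y x in
      Q < QS /\ SW M N alpha beta C C y x < SW M N alpha beta C C yS xS /\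
      QS / Q <= output_ratio_bound (INR M) (INR N) /\
      SW_ratio <= welfare_ratio_bound (INR M) (INR N) /\
      ((alpha - C) / beta = alpha_x_hi (INR M) (INR N) k ->
       QS / Q = output_ratio_bound (INR M) (INR N) /\
       SW_ratio = welfare_ratio_bound (INR M) (INR N)).
Proof.
  intros HM HN Hbeta Hk [Hlo Hhi].
  pose proof (lt_0_INR M HM) as Hm. pose proof (lt_0_INR N HN) as Hn.
  unfold alpha_x_lo in Hlo. apply le_alpha_x_hi in Hhi as Hhi'; [|exact Hn].
  set (a := (alpha - C) / beta) in *.
  assert (Ha : (alpha - C) / beta = a) by reflexivity.
  exists k, (forward_output M N k a), (stackelberg_output M a).
  split; [apply inQ_forward; lra|]. split; [apply inX0_stackelberg; auto; nra|].
  intros j Hj. cbv zeta.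
  rewrite (yspot_forward M N alpha beta C k a) by (auto; lra).
  rewrite (yspot_stackelberg M N alpha beta C k a) by (auto; nra).
  rewrite !(SW_surplus M N alpha beta C a Hbeta Ha).
  change (INR M * forward_output M N k a + INR N * k)
    with (forward_quantity (INR M) (INR N) k a).
  change (INR M * stackelberg_output M a + INR N * stackelberg_follower_output M N a)
    with (stackelberg_quantity (INR M) (INR N) a).
  assert (0 < forward_quantity_min (INR M) (INR N) a)
    by (apply (forward_quantity_min_pos (INR M) (INR N) k a); assumption).
  assert (forward_quantity_min (INR M) (INR N) a <= forward_quantity (INR M) (INR N) k a)
    by (apply (forward_quantity_min_le (INR M) (INR N) k a); assumption).
  assert (HQ : forward_quantity (INR M) (INR N) k a < stackelberg_quantity (INR M) (INR N) a)
    by (apply (forward_lt_stackelberg_quantity (INR M) (INR N) k a); assumption).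
  assert (stackelberg_quantity (INR M) (INR N) a < a)
    by (apply (stackelberg_quantity_lt (INR M) (INR N) k a); assumption).
  set (Q := forward_quantity (INR M) (INR N) k a) in *.
  set (QS := stackelberg_quantity (INR M) (INR N) a) in *.
  assert (Hpos : 0 < surplus a Q) by (apply surplus_pos; lra).
  replace (beta / 2 * surplus a QS / (beta / 2 * surplus a Q)) with (surplus a QS / surplus a Q)
    by (field; lra).
  split; [exact HQ|]. split.
  { apply Rmult_lt_compat_l; [lra|]. apply surplus_lt_mono; lra. }
  split; [apply (output_ratio_le (INR M) (INR N) k a); assumption|].
  split; [apply (welfare_ratio_le (INR M) (INR N) k a); assumption|].
  intros Hat.
  assert (HQmin : Q = forward_quantity_min (INR M) (INR N) a).
  { apply (forward_quantity_at_hi _ _ k); [exact Hm|exact Hn|].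
    rewrite Hat. apply alpha_x_hi_spec. exact Hn. }
  rewrite HQmin.
  split; symmetry; [apply (output_ratio_bound_eq _ _ k)|apply (welfare_ratio_bound_eq _ _ k)];
    assumption.
Qed.

Theorem lemma10 :
  forall (M N : nat) (beta C c k : R),
    (1 <= M)%nat -> (2 <= N)%nat -> 0 < beta -> 0 < C -> C <= c -> 0 < k ->
    (c - C) / beta = 0 ->
    let mR := INR M in
    let nR := INR N in
    let lo := (mR + nR + 1) * k in
    let hi := (mR + 1) * sqrt (nR + 1) / (2 * (sqrt (nR + 1) - 1)) * nR * k in
    let b1 := (mR * nR + mR + nR) * (mR + 1)
              / (mR * (mR + 1) * (nR + 1) + 2 * (nR + 1 - sqrt (nR + 1))) in
    let b2 := (mR + 1) ^ 2 * (mR * nR + mR + nR) * (mR * nR + mR + nR + 2)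
              / ((nR + 1) * ((mR ^ 2 + mR + 2) * sqrt (nR + 1) - 2)
                 * ((mR ^ 2 + 3 * mR) * sqrt (nR + 1) + 2)) in
    (* main claim, for every alpha_x in [lo, hi] *)
    (forall alpha : R, 0 < alpha -> lo <= (alpha - C) / beta <= hi ->
      exists f x xS : R,
        inQ M N alpha beta C c k f x /\ inX0 M N alpha beta C c k xS /\
        forall j, (j < N)%nat ->
          let y := yspot M N alpha beta c k (cst f) (cst x) j in
          let yS := yspot M N alpha beta c k (cst 0) (cst xS) j in
          mR * x + nR * y < mR * xS + nR * yS /\
          SW M N alpha beta C c y x < SW M N alpha beta C c yS xS /\
          (mR * xS + nR * yS) / (mR * x + nR * y) <= b1 /\
          SW M N alpha beta C c yS xS / SW M N alpha beta C c y x <= b2) /\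
    (* tightness of the first bound *)
    (exists alpha : R, 0 < alpha /\ lo <= (alpha - C) / beta <= hi /\
      exists f x xS : R,
        inQ M N alpha beta C c k f x /\ inX0 M N alpha beta C c k xS /\
        forall j, (j < N)%nat ->
          let y := yspot M N alpha beta c k (cst f) (cst x) j in
          let yS := yspot M N alpha beta c k (cst 0) (cst xS) j in
          (mR * xS + nR * yS) / (mR * x + nR * y) = b1) /\
    (* tightness of the second bound *)
    (exists alpha : R, 0 < alpha /\ lo <= (alpha - C) / beta <= hi /\
      exists f x xS : R,
        inQ M N alpha beta C c k f x /\ inX0 M N alpha beta C c k xS /\
        forall j, (j < N)%nat ->
          let y := yspot M N alpha beta c k (cst f) (cst x) j in
          let yS := yspot M N alpha beta c k (cst 0) (cst xS) j in
          SW M N alpha beta C c yS xS / SW M N alpha beta C c y x = b2).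
Proof.
  intros M N beta C c k HM HN Hbeta HC HCc Hk Hcc mR nR lo hi b1 b2.
  assert (c = C) as ->.
  { unfold Rdiv in Hcc. apply Rmult_integral in Hcc as [Hcc|Hcc]; [lra|].
    exfalso. exact (Rinv_neq_0_compat beta ltac:(lra) Hcc). }
  assert (HM0 : (0 < M)%nat) by lia. assert (HN0 : (0 < N)%nat) by lia.
  assert (Hlohi : lo <= hi).
  { apply alpha_x_lo_le_hi; [apply (le_INR 1)|apply (le_INR 1); lia|]; assumption. }
  assert (Hlo : 0 < lo) by (pose proof (pos_INR M); pose proof (pos_INR N); unfold lo, mR, nR; nra).
  set (alpha_hi := C + beta * hi).
  assert (Hahi : (alpha_hi - C) / beta = hi) by (unfold alpha_hi; field; lra).
  assert (Hahi_pos : 0 < alpha_hi) by (unfold alpha_hi; nra).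
  destruct (outcome_comparison M N alpha_hi beta C k HM0 HN0 Hbeta Hk
                  ltac:(rewrite Hahi; split; [exact Hlohi|apply Rle_refl]))
    as (f & x & xS & HQ & HX & Hcmp).
  split; [|split].
  - intros alpha _ Hrange.
    destruct (outcome_comparison M N alpha beta C k HM0 HN0 Hbeta Hk Hrange)
      as (f' & x' & xS' & HQ' & HX' & Hcmp').
    exists f', x', xS'. split; [exact HQ'|]. split; [exact HX'|].
    intros j Hj. destruct (Hcmp' j Hj) as (H1 & H2 & H3 & H4 & _). repeat split; assumption.
  - exists alpha_hi. split; [exact Hahi_pos|]. split; [rewrite Hahi; lra|].
    exists f, x, xS. split; [exact HQ|]. split; [exact HX|].
    intros j Hj. exact (proj1 (proj2 (proj2 (proj2 (proj2 (Hcmp j Hj)))) Hahi)).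
  - exists alpha_hi. split; [exact Hahi_pos|]. split; [rewrite Hahi; lra|].
    exists f, x, xS. split; [exact HQ|]. split; [exact HX|].
    intros j Hj. exact (proj2 (proj2 (proj2 (proj2 (proj2 (Hcmp j Hj)))) Hahi)).
Qed.
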